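(* Let $\bar u\in L^\infty(\Omega)\cap U_{ad}$ be a local solution of the problem $\min_{u\in U_{ad}} f(u)+g(u)$ with respect to the $L^p(\Omega)$-topology for some $1\le p<\infty$ (i.e. $f(\bar u)+g(\bar u)\le f(u)+g(u)$ for all $u\in U_{ad}$ with $\|u-\bar u\|_{L^p(\Omega)}$ sufficiently small). Assume that $$f(u)-f(\bar u)=\int_\Omega \nabla f(\bar u)(u-\bar u)\,dx+o(\|u-\bar u\|_{L^1(\Omega)})\quad\text{as }\|u-\bar u\|_{L^1(\Omega)}\to0,\ u\in U_{ad}.$$ Then for almost every $x\in\Omega$, $$\bar u(x)\in\operatorname*{arg\,min}_{v\in\mathbb R,\ |v|\le b}\Big(\nabla f(\bar u)(x)\, v+\frac\alpha2 v^2+\beta|v|_0\Big).$$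
   Context: Let $\Omega\subset\mathbb R^n$ be a bounded open set with Lebesgue measure. Fix $\alpha\ge0$, $\beta>0$, $b\in(0,+\infty]$ and set $U_{ad}:=\{v\in L^2(\Omega): |v(x)|\le b\text{ a.e. in }\Omega\}$. For $t\in\mathbb R$ let $|t|_0:=0$ if $t=0$ and $|t|_0:=1$ if $t\ne0$; for measurable $u$ let $\|u\|_0:=\operatorname{meas}\{x\in\Omega:u(x)\ne0\}$. Define $g(u):=\frac\alpha2\|u\|_{L^2(\Omega)}^2+\beta\|u\|_0$. The function $f:L^2(\Omega)\to\mathbb R$ is Fréchet differentiable, and $\nabla f(u)\in L^2(\Omega)$ denotes the Riesz representative of its derivative, i.e. $f'(u)h=\int_\Omega\nabla f(u)h\,dx$. *)

From HB Require Import structures.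
From mathcomp Require Import all_boot all_order all_algebra.
From mathcomp Require Import all_classical all_reals all_analysis.
Set Implicit Arguments. Unset Strict Implicit. Unset Printing Implicit Defensive.
Import Order.TTheory GRing.Theory Num.Theory.
Local Open Scope classical_set_scope.
Local Open Scope ring_scope.

(* R^n is modelled as n.-tuple R, with the product (= Borel) sigma-algebra. *)

Definition box {R : realType} {n : nat} (a b : n.-tuple R) : set (n.-tuple R) :=
  [set x | forall i : 'I_n, tnth a i <= tnth x i <= tnth b i].

(* mu is the Lebesgue measure on (the Borel sets of) R^n: it gives every box
   its volume (this determines mu uniquely on the Borel sigma-algebra). *)
Definition is_lebesgue_measure {R : realType} {n : nat}
  (mu : set (n.-tuple R) -> \bar R) : Prop :=
  forall a b : n.-tuple R, (forall i : 'I_n, tnth a i <= tnth b i) ->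
    mu (box a b) = (\prod_(i < n) (tnth b i - tnth a i))%:E.

(* open subset of R^n (sup-norm balls; equivalent to Euclidean topology) *)
Definition open_Rn {R : realType} {n : nat} (O : set (n.-tuple R)) : Prop :=
  forall x, O x -> exists2 e : R, 0 < e &
    forall y : n.-tuple R, (forall i : 'I_n, `|tnth y i - tnth x i| < e) -> O y.

Definition bounded_Rn {R : realType} {n : nat} (O : set (n.-tuple R)) : Prop :=
  exists M : R, forall x, O x -> forall i : 'I_n, `|tnth x i| <= M.

Definition abs0 {R : realType} (t : R) : R := if t == 0 then 0 else 1.

Definition inL2 {R : realType} {n : nat} (mu : {measure set (n.-tuple R) -> \bar R})
  (Om : set (n.-tuple R)) (u : n.-tuple R -> R) : Prop :=
  measurable_fun Om u /\ (\int[mu]_(x in Om) ((u x) ^+ 2)%:E < +oo)%E.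

Definition inLinf {R : realType} {n : nat} (mu : {measure set (n.-tuple R) -> \bar R})
  (Om : set (n.-tuple R)) (u : n.-tuple R -> R) : Prop :=
  measurable_fun Om u /\ exists M : R, {ae mu, forall x, Om x -> `|u x| <= M}.

Definition Uad {R : realType} {n : nat} (mu : {measure set (n.-tuple R) -> \bar R})
  (Om : set (n.-tuple R)) (b : \bar R) (u : n.-tuple R -> R) : Prop :=
  inL2 mu Om u /\ {ae mu, forall x, Om x -> (`|u x|%:E <= b)%E}.

Definition LpnormOm {R : realType} {n : nat} (mu : {measure set (n.-tuple R) -> \bar R})
  (Om : set (n.-tuple R)) (p : R) (u : n.-tuple R -> R) : \bar R :=
  Lnorm mu p%:E (fun x => if `[< Om x >] then (u x)%:E else 0%E).

Definition l0norm {R : realType} {n : nat} (mu : {measure set (n.-tuple R) -> \bar R})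
  (Om : set (n.-tuple R)) (u : n.-tuple R -> R) : \bar R :=
  mu [set x | Om x /\ u x != 0].

Definition gfun {R : realType} {n : nat} (mu : {measure set (n.-tuple R) -> \bar R})
  (Om : set (n.-tuple R)) (alpha beta : R) (u : n.-tuple R -> R) : \bar R :=
  ((alpha / 2)%:E * \int[mu]_(x in Om) ((u x) ^+ 2)%:E + beta%:E * l0norm mu Om u)%E.

Definition frechet_L2 {R : realType} {n : nat} (mu : {measure set (n.-tuple R) -> \bar R})
  (Om : set (n.-tuple R)) (f : (n.-tuple R -> R) -> R)
  (gradf : (n.-tuple R -> R) -> n.-tuple R -> R) : Prop :=
  forall u, inL2 mu Om u ->
    inL2 mu Om (gradf u) /\
    forall eps : R, 0 < eps -> exists2 delta : R, 0 < delta &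
      forall h, inL2 mu Om h -> (LpnormOm mu Om 2 h < delta%:E)%E ->
        (`| (f (u \+ h) - f u)%:E - \int[mu]_(x in Om) (gradf u x * h x)%:E |
           <= eps%:E * LpnormOm mu Om 2 h)%E.

Definition is_argmin {R : realType} (S : set R) (F : R -> R) (v0 : R) : Prop :=
  S v0 /\ forall v, S v -> F v0 <= F v.

From HB Require Import structures.
From mathcomp Require Import all_boot all_order all_algebra.
From mathcomp Require Import all_classical all_reals all_analysis.
From mathcomp Require Import ring lra.
From mathcomp Require Import measurable_realfun.
Import Order.TTheory GRing.Theory Num.Theory.
Local Open Scope classical_set_scope.
Local Open Scope ring_scope.

(* Needle variations.  Suppose the pointwise minimisation fails on a set of positive
   measure.  Then some admissible value v beats ubar(x) by a margin dlt on a set E of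
   positive measure, on which ubar and the gradient G are moreover bounded; by density
   of the rationals, v and dlt range over a countable family.  Lebesgue measure has no
   atoms, so E contains a set S of arbitrarily small positive measure s.  The function
   u equal to v on S and to ubar elsewhere is admissible and O(s)-close to ubar in L^1
   and L^p, so local optimality and the first-order expansion of f give
     0 <= f(u) + g(u) - f(ubar) - g(ubar) <= \int_S (cost v - cost ubar) + o(s) <= - dlt s / 2,
   a contradiction. *)

Lemma bounded_near_le {T : Type} {R : realType} (A : set T) (h : T -> R) (c : R) :
  (forall x, A x -> `|h x| <= c) -> [bounded h x | x in A].
Proof.
move=> hc; exists c; split; first exact: num_real.
by move=> M cM x Ax; exact/(le_trans (hc x Ax))/ltW.
Qed.

Lemma lt_of_poweR_le {R : realType} {x : \bar R} {y r p : R} : 0 < p -> 0 <= r ->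
  (0 <= x)%E -> (x `^ p <= y%:E)%E -> y < r `^ p -> (x < r%:E)%E.
Proof.
move=> p0 r0 x0 xy yr; rewrite ltNge; apply/negP => rx.
have ir : r%:E \in `[0%E, +oo%E] by rewrite in_itv /= lee_fin r0 leey.
have ix : x \in `[0%E, +oo%E] by rewrite in_itv /= x0 leey.
have := le_trans (gt0_ler_poweR (ltW p0) ir ix rx) xy.
by rewrite poweR_EFin lee_fin leNgt yr.
Qed.

Section integral_support.
Context {d} {T : measurableType d} {R : realType} (mu : {measure set T -> \bar R}).

Lemma integral_setS_support {D S : set T} {h : T -> \bar R} : S `<=` D ->
  (forall x, D x -> ~ S x -> h x = 0%E) ->
  (\int[mu]_(x in D) h x = \int[mu]_(x in S) h x)%E.
Proof.
move=> SD h0; rewrite integral_mkcond [RHS]integral_mkcond.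
apply: eq_integral => x _; rewrite !patchE.
have [xS|xS] := boolP (x \in S); first by rewrite mem_set //; exact/SD/set_mem.
have [xD|//] := boolP (x \in D).
by rewrite h0 //; [exact: set_mem | move/mem_set; rewrite (negbTE xS)].
Qed.

Lemma Rintegral_setS_support {D S : set T} {h : T -> R} : S `<=` D ->
  (forall x, D x -> ~ S x -> h x = 0) ->
  \int[mu]_(x in D) h x = \int[mu]_(x in S) h x.
Proof.
by move=> SD h0; congr fine; apply: integral_setS_support => // x Dx /(h0 x Dx) ->.
Qed.

Lemma RintegralB_support {D S : set T} {h k : T -> R} : measurable D -> S `<=` D ->
  mu.-integrable D (EFin \o h) -> mu.-integrable D (EFin \o k) ->
  (forall x, D x -> ~ S x -> h x = k x) ->
  \int[mu]_(x in D) h x - \int[mu]_(x in D) k x = \int[mu]_(x in S) (h x - k x).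
Proof.
move=> mD SD ih ik hk; rewrite -RintegralB //.
by apply: Rintegral_setS_support => // x Dx nSx; rewrite hk ?subrr.
Qed.

Lemma EFin_Rintegral (D : set T) (h : T -> R) : measurable D ->
  mu.-integrable D (EFin \o h) ->
  (\int[mu]_(x in D) h x)%:E = (\int[mu]_(x in D) (h x)%:E)%E.
Proof. by move=> mD ih; rewrite /Rintegral fineK // (integrable_fin_num mD ih). Qed.

Lemma ge0_integrable (D : set T) (h : T -> R) : measurable_fun D h ->
  (forall x, D x -> 0 <= h x) -> (\int[mu]_(x in D) (h x)%:E < +oo)%E ->
  mu.-integrable D (EFin \o h).
Proof.
move=> mh h0 hfin; apply/integrableP; split; first exact/measurable_EFinP.
by rewrite (eq_integral (fun x => (h x)%:E)) // => x /[!inE] Dx /=; rewrite ger0_norm ?h0.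
Qed.

End integral_support.

Section abs0.
Context {R : realType}.

Lemma abs0E (t : R) : abs0 t = (t != 0)%:R.
Proof. by rewrite /abs0; case: eqP. Qed.

Lemma measurable_abs0 : measurable_fun [set: R] (@abs0 R).
Proof.
rewrite (_ : abs0 = \1_(~` [set 0]) :> (R -> R)).
  exact: measurable_indic (measurableC (measurable_set1 0)).
by apply/funext => t; rewrite abs0E indicE in_setC in_set1.
Qed.

Lemma norm_abs0B_le1 (s t : R) : `|abs0 s - abs0 t| <= 1.
Proof.
rewrite !abs0E; case: (s != 0); case: (t != 0);
  by rewrite ?subrr ?normr0 ?subr0 ?sub0r ?normrN ?normr1.
Qed.

Lemma norm_abs0_le1 (t : R) : `|abs0 t| <= 1.
Proof. by have := norm_abs0B_le1 t 0; rewrite [abs0 0]abs0E eqxx subr0. Qed.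

Lemma integrable_abs0 {d} {T : measurableType d} (mu : {measure set T -> \bar R})
    (D : set T) (w : T -> R) :
  measurable D -> (mu D < +oo)%E -> measurable_fun D w ->
  mu.-integrable D (EFin \o (fun x => abs0 (w x))).
Proof.
move=> mD Dfin mw; apply: measurable_bounded_integrable => //.
  exact: measurableT_comp measurable_abs0 mw.
by apply: bounded_near_le => x _; exact: norm_abs0_le1.
Qed.

Lemma l0norm_Rintegral n (mu : {measure set (n.-tuple R) -> \bar R}) Om w :
  measurable Om -> (mu Om < +oo)%E -> measurable_fun Om w ->
  l0norm mu Om w = (\int[mu]_(x in Om) abs0 (w x))%:E.
Proof.
move=> mOm Omfin mw.
have mw0 : measurable (Om `&` w @^-1` (~` [set 0])).
  exact: mw mOm _ (measurableC (measurable_set1 0)).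
rewrite EFin_Rintegral ?integrable_abs0 //.
rewrite /l0norm (_ : [set x | _] = (Om `&` w @^-1` (~` [set 0])) `&` Om); last first.
  apply/seteqP; split => [x /= [Ox /eqP wx] //|x /= [[Ox wx] _]].
  by split => //; apply/eqP.
rewrite -integral_indic //; apply: eq_integral => x /[!inE] Ox.
rewrite indicE abs0E; case: eqP => [w0|/eqP w0] /=.
  by rewrite memNset // => -[_ /(_ w0)].
by rewrite mem_set //; split => //; exact/eqP.
Qed.

End abs0.

Section lebesgue_boxes.
Context {R : realType} {n : nat}.

Lemma measurable_box (a b : n.-tuple R) : measurable (box a b).
Proof.
have -> : box a b = \bigcap_(i in [set: 'I_n])
   ([set: n.-tuple R] `&` (fun x => tnth x i) @^-1` [set` `[tnth a i, tnth b i]]).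
  apply/seteqP; split => x /=.
    by move=> H i _; split => //=; rewrite in_itv /= H.
  by move=> H i; have [_ /=] := H i I; rewrite in_itv.
apply: fin_bigcap_measurable; first exact: finite_finset.
by move=> i _; apply: measurable_tnth => //; exact: measurable_itv.
Qed.

Lemma bounded_RnP (E : set (n.-tuple R)) : bounded_Rn E ->
  exists2 A : R, 0 < A & forall x, E x -> forall i, `|tnth x i| <= A.
Proof.
case=> M HM; exists (`|M| + 1); first by rewrite ltr_pwDr.
move=> x Ex i; apply: le_trans (HM x Ex i) _.
by apply: le_trans (ler_norm M) _; rewrite lerDl.
Qed.

End lebesgue_boxes.

Section slabs.
Context {R : realType} {n : nat}.

Definition slab (A c w : R) : set (n.+1.-tuple R) :=
  box [tuple if i == ord0 then c else - A | i < n.+1]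
      [tuple if i == ord0 then c + w else A | i < n.+1].

Lemma mem_slab (A c w : R) (x : n.+1.-tuple R) :
  (forall i, `|tnth x i| <= A) -> c <= tnth x ord0 <= c + w -> slab A c w x.
Proof.
by move=> xA x0 i; rewrite !tnth_mktuple; case: ifP => [/eqP -> //|_]; rewrite -ler_norml.
Qed.

Variables (mu : {measure set (n.+1.-tuple R) -> \bar R}) (mu_leb : is_lebesgue_measure mu).

Lemma slab_measure (A c w : R) : 0 <= A -> 0 <= w ->
  mu (slab A c w) = (w * (A + A) ^+ n)%:E.
Proof.
move=> A0 w0; rewrite mu_leb; last first.
  by move=> i; rewrite !tnth_mktuple; case: ifP => _; rewrite ?lerDl // -subr_ge0 opprK addr_ge0.
congr EFin; rewrite big_ord_recl !tnth_mktuple eqxx addrAC subrr add0r.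
congr (_ * _); rewrite (eq_bigr (fun _ => A + A)) ?prodr_const ?card_ord // => i _.
by rewrite !tnth_mktuple eq_sym (negbTE (neq_lift _ _)) opprK.
Qed.

Lemma bounded_Rn_measure_lty (E : set (n.+1.-tuple R)) :
  measurable E -> bounded_Rn E -> (mu E < +oo)%E.
Proof.
move=> mE /bounded_RnP[A A0 EA].
have EJ : E `<=` slab A (- A) (A + A).
  move=> x Ex; apply: mem_slab (EA x Ex) _.
  by have := EA x Ex ord0; rewrite ler_norml addrA addNr add0r.
have : (mu E <= mu (slab A (- A) (A + A)))%E.
  by apply: le_measure; rewrite ?inE //; exact: measurable_box.
by move/le_lt_trans; apply; rewrite slab_measure ?ltry // ?addr_ge0 // ltW.
Qed.

Lemma lebesgue_nonatomic (E : set (n.+1.-tuple R)) (t : R) :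
  measurable E -> bounded_Rn E -> (0 < mu E)%E -> 0 < t ->
  exists S, [/\ measurable S, S `<=` E, (0 < mu S)%E & (mu S < t%:E)%E].
Proof.
move=> mE /bounded_RnP[A A0 EA] Epos t0.
pose h := t / ((A + A) ^+ n + 1).
have h0 : 0 < h by rewrite divr_gt0 // ltr_pwDr // exprn_ge0 // addr_ge0 // ltW.
pose J k := slab A (- A + k%:R * h) h.
have mEJ k : measurable (E `&` J k) by apply: measurableI => //; exact: measurable_box.
have [k Ek] : exists k, (0 < mu (E `&` J k))%E.
  apply/not_existsP => Ek0; suff /(measure_negligible mE) E0 : mu.-negligible E.
    by rewrite E0 ltxx in Epos.
  have : mu.-negligible (\bigcup_k (E `&` J k)).
    apply: negligible_bigcup => k; apply/(negligibleP _ (mEJ k)).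
    by apply/eqP; rewrite eq_le measure_ge0 andbT leNgt; exact/negP/Ek0.
  apply: negligibleS => x Ex; have y0 : 0 <= (tnth x ord0 + A) / h.
    rewrite divr_ge0 ?(ltW h0) //; have := EA x Ex ord0.
    by rewrite ler_norml -lerBlDr sub0r => /andP[].
  exists (Num.trunc ((tnth x ord0 + A) / h)) => //; split => //.
  apply: mem_slab (EA x Ex) _; move: (truncn_itv y0).
  rewrite ler_pdivlMr // ltr_pdivrMr // -natr1 => /andP[k1 k2]; lra.
exists (E `&` J k); split => //.
have : (mu (E `&` J k) <= mu (J k))%E.
  by apply: le_measure; rewrite ?inE //; exact: measurable_box.
move/le_lt_trans; apply.
rewrite slab_measure ?(ltW h0) ?(ltW A0) // lte_fin -ltr_pdivlMl // mulrC.
by rewrite /h invf_div mulrCA divff ?gt_eqF // mulr1 ltrDl ltr01.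
Qed.

End slabs.

Definition needle {T : Type} {R : pzRingType} (w : T -> R) (S : set T) (v : R) : T -> R :=
  fun x => w x + (v - w x) * \1_S x.

Section needle.
Context {T : Type} {R : pzRingType} (w : T -> R) (S : set T) (v : R).

Lemma needle_in x : S x -> needle w S v x = v.
Proof. by move=> Sx; rewrite /needle indicE mem_set // mulr1 addrC subrK. Qed.

Lemma needle_out x : ~ S x -> needle w S v x = w x.
Proof. by move=> nSx; rewrite /needle indicE memNset // mulr0 addr0. Qed.

End needle.

Lemma measurable_needle d (T : measurableType d) (R : realType) (D S : set T)
    (w : T -> R) (v : R) :
  measurable S -> measurable_fun D w -> measurable_fun D (needle w S v).
Proof.
move=> mS mw; apply: measurable_funD => //; apply: measurable_funM.
  exact: measurable_funB.
exact: measurable_indic.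
Qed.

Section needle_Lp.
Context {R : realType} {n : nat} (mu : {measure set (n.-tuple R) -> \bar R}).
Variables (Om : set (n.-tuple R)) (mOm : measurable Om) (Om_fin : (mu Om < +oo)%E).

Lemma inL2_needle (w : n.-tuple R -> R) (S : set (n.-tuple R)) (v : R) :
  measurable S -> inL2 mu Om w -> inL2 mu Om (needle w S v).
Proof.
move=> mS [mw w2]; split; first exact: measurable_needle.
have sqr_ge0E (h : n.-tuple R -> R) x : (0 <= (h x ^+ 2)%:E)%E by rewrite lee_fin sqr_ge0.
apply: (@le_lt_trans _ _ (\int[mu]_(x in Om) ((w x ^+ 2)%:E + (cst (v ^+ 2)%:E) x))%E).
  apply: ge0_le_integral => //.
  - by apply/measurable_EFinP; apply: measurable_funX; exact: measurable_needle.
  - by apply: emeasurable_funD => //; apply/measurable_EFinP; exact: measurable_funX.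
  - move=> x Ox /=; rewrite -EFinD lee_fin.
    have [Sx|nSx] := pselect (S x); first by rewrite needle_in // lerDr sqr_ge0.
    by rewrite needle_out // lerDl sqr_ge0.
rewrite ge0_integralD //; last 2 first.
- by apply/measurable_EFinP; exact: measurable_funX.
- by move=> x _; rewrite lee_fin sqr_ge0.
rewrite integral_cst //; apply: lte_add_pinfty => //.
by rewrite lte_mul_pinfty // lee_fin sqr_ge0.
Qed.

Lemma Uad_needle (b : \bar R) (w : n.-tuple R -> R) (S : set (n.-tuple R)) (v : R) :
  measurable S -> (`|v|%:E <= b)%E -> Uad mu Om b w -> Uad mu Om b (needle w S v).
Proof.
move=> mS vb [w2 wb]; split; first exact: inL2_needle.
apply: filterS wb => x wb Ox; have [Sx|nSx] := pselect (S x).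
  by rewrite needle_in.
by rewrite needle_out // wb.
Qed.

Lemma LpnormOm_pow_le (p C : R) (h : n.-tuple R -> R) (S : set (n.-tuple R)) :
  0 < p -> measurable S -> S `<=` Om -> measurable_fun S h ->
  (forall x, Om x -> ~ S x -> h x = 0) -> (forall x, S x -> `|h x| <= C) ->
  (LpnormOm mu Om p h `^ p <= (C `^ p)%:E * mu S)%E.
Proof.
move=> p0 mS SOm mh h0 hC; rewrite /LpnormOm poweR_Lnorm ?gt_eqF //.
rewrite (integral_setS_support mu (subsetT S)); last first.
  move=> x _ nSx; case: asboolP => [Ox|_]; last by rewrite abse0 poweR0r ?gt_eqF.
  by rewrite h0 // abse0 poweR0r ?gt_eqF.
rewrite -integral_cst //; apply: ge0_le_integral => //.
- by move=> x _; rewrite poweR_ge0.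
- apply: (eq_measurable_fun (fun x => (`|h x| `^ p)%:E)).
    by move=> x /[!inE] /SOm Ox; rewrite asboolT //= poweR_EFin.
  apply/measurable_EFinP; apply: measurableT_comp (measurable_powR p) _.
  exact: measurableT_comp.
move=> x Sx; rewrite asboolT; last exact: SOm.
have C0 : 0 <= C := le_trans (normr_ge0 _) (hC x Sx).
by rewrite /= lee_fin (ge0_ler_powR (ltW p0)) ?nnegrE // hC.
Qed.

Lemma LpnormOm_needle_pow_le (S : set (n.-tuple R)) (w : n.-tuple R -> R) (v D q : R) :
  0 < q -> measurable S -> S `<=` Om -> measurable_fun Om w ->
  (forall x, S x -> `|v - w x| <= D) ->
  (LpnormOm mu Om q (fun x => (needle w S v x - w x)%R) `^ q <= (D `^ q)%:E * mu S)%E.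
Proof.
move=> q0 mS SOm mw vw; apply: LpnormOm_pow_le => //.
- have mSw := measurable_funS mOm SOm mw.
  by apply: measurable_funB => //; exact: measurable_needle.
- by move=> x _ nSx; rewrite needle_out ?subrr.
- by move=> x Sx; rewrite needle_in // vw.
Qed.

End needle_Lp.

Definition cost {R : realType} (g alpha beta v : R) : R :=
  g * v + alpha / 2 * v ^+ 2 + beta * abs0 v.

Section pointwise.
Context {R : realType}.

Lemma rat_approx_abs0 (v e : R) : 0 < e ->
  exists q : rat, [/\ `|ratr q : R| <= `|v|, abs0 (ratr q : R) = abs0 v & `|ratr q - v| < e].
Proof.
move=> e0; have [v0|vn|<-] := ltgtP 0 v; last first.
- by exists 0%Q; rewrite rmorph0 subrr normr0.
- have /rat_in_itvoo[q] : v < Num.min 0 (v + e) by rewrite lt_min vn ltrDl.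
  rewrite in_itv /= lt_min => /andP[vq /andP[q0 qe]]; exists q.
  rewrite /abs0 !lt_eqF // (ltr0_norm vn) (ltr0_norm q0) gtr0_norm ?subr_gt0 //.
  by split => //; [rewrite lerN2 ltW | lra].
- have /rat_in_itvoo[q] : Num.max 0 (v - e) < v by rewrite gt_max v0 ltrBlDr ltrDl.
  rewrite in_itv /= gt_max => /andP[/andP[q0 qe] qv]; exists q.
  rewrite /abs0 !gt_eqF // (gtr0_norm v0) (gtr0_norm q0) ltr0_norm ?subr_lt0 //.
  by split => //; [rewrite ltW | lra].
Qed.

Lemma cost_rat_approx {g alpha beta v c : R} : 0 <= alpha -> cost g alpha beta v < c ->
  exists q : rat, `|ratr q : R| <= `|v| /\ cost g alpha beta (ratr q) < c.
Proof.
move=> alpha0 vc; pose M := `|g| + alpha * `|v| + 1.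
have M0 : 0 < M by rewrite ltr_pwDr // addr_ge0 // mulr_ge0.
have cv0 : 0 < c - cost g alpha beta v by rewrite subr_gt0.
have [q [qv qv0 qve]] := rat_approx_abs0 v _ (divr_gt0 cv0 M0).
exists q; split => //; set r : R := ratr q in qv qv0 qve *.
have -> : cost g alpha beta r
    = cost g alpha beta v + (r - v) * (g + alpha / 2 * (r + v)).
  by rewrite /cost qv0; ring.
have gM : `|g + alpha / 2 * (r + v)| <= M.
  have rv : `|r + v| <= `|v| + `|v| by apply: le_trans (ler_normD _ _) _; rewrite lerD2r.
  apply: le_trans (ler_normD _ _) _; rewrite /M -addrA lerD2l normrM ger0_norm ?divr_ge0 //.
  by apply: le_trans (ler_wpM2l (divr_ge0 alpha0 (ler0n _ 2)) rv) _; lra.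
have : `|(r - v) * (g + alpha / 2 * (r + v))| < c - cost g alpha beta v.
  rewrite normrM; apply: le_lt_trans (ler_wpM2l (normr_ge0 _) gM) _.
  by rewrite -ltr_pdivlMr.
by move/ltr_normlP => [_]; lra.
Qed.

Lemma not_argmin_witness {g alpha beta w : R} {b : \bar R} :
  0 <= alpha -> (`|w|%:E <= b)%E ->
  ~ is_argmin [set v | (`|v|%:E <= b)%E] (cost g alpha beta) w ->
  exists q : rat, exists k K : nat,
    [/\ (`|ratr q : R|%:E <= b)%E, `|w| <= K%:R, `|g| <= K%:R &
         cost g alpha beta (ratr q) <= cost g alpha beta w - k.+1%:R^-1].
Proof.
move=> alpha0 wb wmin.
have [v [vb vw]] : exists v, (`|v|%:E <= b)%E /\ cost g alpha beta v < cost g alpha beta w.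
  apply: contrapT => nv; apply: wmin; split => // v vb.
  by rewrite leNgt; apply/negP => vw; apply: nv; exists v.
have [q [qv qw]] := cost_rat_approx alpha0 vw.
set d := cost g alpha beta w - cost g alpha beta (ratr q).
have d0 : 0 < d by rewrite subr_gt0.
have K_gt : `|w| + `|g| < (Num.bound (`|w| + `|g|))%:R by rewrite archi_boundP ?addr_ge0.
exists q, (Num.bound d^-1), (Num.bound (`|w| + `|g|)); split.
- by apply: le_trans vb; rewrite lee_fin.
- by apply: ltW (le_lt_trans _ K_gt); rewrite lerDl.
- by apply: ltW (le_lt_trans _ K_gt); rewrite lerDr.
rewrite lerBrDr -lerBrDl -/d -[leRHS]invrK lef_pV2 ?posrE ?invr_gt0 //.
have d0' : 0 <= d^-1 by rewrite invr_ge0 ltW.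
by apply: ltW (lt_le_trans (archi_boundP d0') _); rewrite ler_nat.
Qed.

End pointwise.

Section needle_variation.
Context {R : realType} {n : nat} (mu : {measure set (n.-tuple R) -> \bar R}).
Variables (Om : set (n.-tuple R)) (mOm : measurable Om) (Om_fin : (mu Om < +oo)%E).
Variables (alpha beta : R) (f : (n.-tuple R -> R) -> R) (G ubar : n.-tuple R -> R).
Hypotheses (mG : measurable_fun Om G) (ubar_L2 : inL2 mu Om ubar).

Lemma inL2_integrable_sqr (w : n.-tuple R -> R) : inL2 mu Om w ->
  mu.-integrable Om (EFin \o (fun x => w x ^+ 2)).
Proof.
move=> [mw w2]; apply: ge0_integrable => //; first exact: measurable_funX.
by move=> x _; exact: sqr_ge0.
Qed.

Lemma gfun_Rintegral (w : n.-tuple R -> R) : inL2 mu Om w ->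
  gfun mu Om alpha beta w =
  (alpha / 2 * \int[mu]_(x in Om) (w x ^+ 2) + beta * \int[mu]_(x in Om) abs0 (w x))%:E.
Proof.
move=> wL2; rewrite /gfun l0norm_Rintegral //; last by case: wL2.
by rewrite -EFin_Rintegral // inL2_integrable_sqr.
Qed.

Lemma gfun_needle (S : set (n.-tuple R)) (v : R) : measurable S -> S `<=` Om ->
  gfun mu Om alpha beta (needle ubar S v) = (gfun mu Om alpha beta ubar
    + (alpha / 2 * \int[mu]_(x in S) (v ^+ 2 - ubar x ^+ 2)
       + beta * \int[mu]_(x in S) (abs0 v - abs0 (ubar x)))%:E)%E.
Proof.
move=> mS SOm; have uL2 : inL2 mu Om (needle ubar S v) by exact: inL2_needle.
have mub : measurable_fun Om ubar by case: ubar_L2.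
have eQ : \int[mu]_(x in Om) (needle ubar S v x ^+ 2) - \int[mu]_(x in Om) (ubar x ^+ 2)
          = \int[mu]_(x in S) (v ^+ 2 - ubar x ^+ 2).
  rewrite (RintegralB_support mu mOm SOm) ?inL2_integrable_sqr //; last first.
    by move=> x _ nSx; rewrite needle_out.
  by apply: eq_Rintegral => x /[!inE] Sx; rewrite needle_in.
have eL : \int[mu]_(x in Om) abs0 (needle ubar S v x) - \int[mu]_(x in Om) abs0 (ubar x)
          = \int[mu]_(x in S) (abs0 v - abs0 (ubar x)).
  rewrite (RintegralB_support mu mOm SOm) ?integrable_abs0 //; last first.
  - by move=> x _ nSx; rewrite needle_out.
  - by case: uL2.
  by apply: eq_Rintegral => x /[!inE] Sx; rewrite needle_in.
by rewrite !gfun_Rintegral // -EFinD -eQ -eL; congr EFin; ring.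
Qed.

Section bounded_on.
Variables (S : set (n.-tuple R)) (v C : R).
Hypotheses (mS : measurable S) (SOm : S `<=` Om) (vC : `|v| <= C).
Hypothesis bndS : forall x, S x -> `|ubar x| <= C /\ `|G x| <= C.

Let Sfin : (mu S < +oo)%E.
Proof. by apply: le_lt_trans Om_fin; apply: le_measure; rewrite ?inE. Qed.

Lemma integrable_cost_terms :
  [/\ mu.-integrable S (EFin \o (fun x => G x * (v - ubar x))),
      mu.-integrable S (EFin \o (fun x => v ^+ 2 - ubar x ^+ 2)) &
      mu.-integrable S (EFin \o (fun x => abs0 v - abs0 (ubar x)))].
Proof.
have mSub : measurable_fun S ubar by apply: measurable_funS mOm SOm _; case: ubar_L2.
have mSG := measurable_funS mOm SOm mG.
have intS (h : n.-tuple R -> R) (k : R) : measurable_fun S h ->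
    (forall x, S x -> `|h x| <= k) -> mu.-integrable S (EFin \o h).
  by move=> mh hk; apply: measurable_bounded_integrable => //; exact: bounded_near_le hk.
have sqrC a : `|a| <= C -> `|a ^+ 2| <= C * C by move=> aC; rewrite normrX expr2 ler_pM.
split.
- apply: (intS _ (C * (C + C))) => [|x /bndS[uC GC]].
    by apply: measurable_funM => //; exact: measurable_funB.
  by rewrite normrM ler_pM // (le_trans (ler_normB _ _)) // lerD.
- apply: (intS _ (C * C + C * C)) => [|x /bndS[uC _]].
    by apply: measurable_funB => //; exact: measurable_funX.
  by rewrite (le_trans (ler_normB _ _)) // lerD // sqrC.
- apply: (intS _ 1) => [|x _]; last exact: norm_abs0B_le1.
  exact/measurable_funB/(measurableT_comp measurable_abs0).
Qed.

Lemma Rintegral_cost_le (c : R) :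
  (forall x, S x -> cost (G x) alpha beta v - cost (G x) alpha beta (ubar x) <= c) ->
  \int[mu]_(x in S) (G x * (v - ubar x)) + alpha / 2 * \int[mu]_(x in S) (v ^+ 2 - ubar x ^+ 2)
    + beta * \int[mu]_(x in S) (abs0 v - abs0 (ubar x)) <= c * fine (mu S).
Proof.
move=> costc; have [i1 i2 i3] := integrable_cost_terms.
have iZ (k : R) (h : n.-tuple R -> R) : mu.-integrable S (EFin \o h) ->
    mu.-integrable S (EFin \o (fun x => k * h x)).
  by move=> /(integrableZl mS k); apply: eq_integrable => // x _; rewrite /= EFinM.
have iD (h1 h2 : n.-tuple R -> R) : mu.-integrable S (EFin \o h1) ->
    mu.-integrable S (EFin \o h2) -> mu.-integrable S (EFin \o (fun x => h1 x + h2 x)).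
  by move=> ih1 /(integrableD mS ih1); apply: eq_integrable => // x _; rewrite /= EFinD.
rewrite -!RintegralZl // -!RintegralD ?iD ?iZ // -Rintegral_cst //.
apply: le_Rintegral => //; first by rewrite ?iD ?iZ.
  by apply: measurable_bounded_integrable => //; exact: bounded_cst.
move=> x Sx; apply: le_trans (costc x Sx); rewrite le_eqVlt; apply/orP; left; apply/eqP.
by rewrite /cost; ring.
Qed.

Lemma needle_increment_le (c e : R) :
  (forall x, S x -> cost (G x) alpha beta v - cost (G x) alpha beta (ubar x) <= c) ->
  (`|(f (needle ubar S v) - f ubar)%:E
     - \int[mu]_(x in Om) (G x * (needle ubar S v x - ubar x))%:E| <= e%:E)%E ->
  ((f (needle ubar S v))%:E + gfun mu Om alpha beta (needle ubar S v)
     <= (f ubar)%:E + gfun mu Om alpha beta ubar + (c * fine (mu S) + e)%:E)%E.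
Proof.
move=> costc fexp; have [i1 _ _] := integrable_cost_terms.
have grad_term : (\int[mu]_(x in Om) (G x * (needle ubar S v x - ubar x))%:E
                  = (\int[mu]_(x in S) (G x * (v - ubar x)))%:E)%E.
  rewrite EFin_Rintegral // (integral_setS_support mu SOm); last first.
    by move=> x _ nSx; rewrite needle_out // subrr mulr0.
  by apply: eq_integral => x /[!inE] Sx; rewrite needle_in.
rewrite grad_term -EFinB /= lee_fin in fexp; move/ler_normlP: fexp => [_ fe].
have := Rintegral_cost_le _ costc.
rewrite gfun_needle // !gfun_Rintegral // -!EFinD lee_fin; lra.
Qed.

End bounded_on.

End needle_variation.

Section local_optimality.
Context {R : realType} {n : nat} (mu : {measure set (n.-tuple R) -> \bar R}).
Variables (Om : set (n.-tuple R)) (mOm : measurable Om) (Om_fin : (mu Om < +oo)%E).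
Hypothesis mu_nonatomic : forall (E : set (n.-tuple R)) (t : R),
  measurable E -> E `<=` Om -> (0 < mu E)%E -> 0 < t ->
  exists S, [/\ measurable S, S `<=` E, (0 < mu S)%E & (mu S < t%:E)%E].
Variables (alpha beta : R) (b : \bar R) (f : (n.-tuple R -> R) -> R).
Variables (G ubar : n.-tuple R -> R) (p : R).
Hypotheses (alpha_ge0 : 0 <= alpha) (mG : measurable_fun Om G).
Hypotheses (ubar_ad : Uad mu Om b ubar) (p_ge1 : 1 <= p).
Hypothesis ubar_loc : exists2 r : R, 0 < r & forall u, Uad mu Om b u ->
  (LpnormOm mu Om p (fun x => (u x - ubar x)%R) < r%:E)%E ->
  ((f ubar)%:E + gfun mu Om alpha beta ubar <= (f u)%:E + gfun mu Om alpha beta u)%E.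
Hypothesis f_exp : forall eps : R, 0 < eps -> exists2 delta : R, 0 < delta &
  forall u, Uad mu Om b u -> (LpnormOm mu Om 1 (fun x => (u x - ubar x)%R) < delta%:E)%E ->
    (`| (f u - f ubar)%:E - \int[mu]_(x in Om) (G x * (u x - ubar x))%R%:E |
       <= eps%:E * LpnormOm mu Om 1 (fun x => (u x - ubar x)%R))%E.

Definition bad_set (v dlt K : R) := [set x | Om x /\ `|ubar x| <= K /\ `|G x| <= K /\
  cost (G x) alpha beta v <= cost (G x) alpha beta (ubar x) - dlt].

Lemma measurable_bad_set (v dlt K : R) : measurable (bad_set v dlt K).
Proof.
have mub : measurable_fun Om ubar by case: ubar_ad => [[]].
have mcost (h : n.-tuple R -> R) : measurable_fun Om h ->
    measurable_fun Om (fun x => cost (G x) alpha beta (h x)).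
  move=> mh; apply: measurable_funD; last first.
    by apply: measurable_funM => //; exact: measurableT_comp measurable_abs0 mh.
  by apply: measurable_funD; apply: measurable_funM => //; exact: measurable_funX.
have mle (h k : n.-tuple R -> R) : measurable_fun Om h -> measurable_fun Om k ->
    measurable (Om `&` [set x | h x <= k x]).
  move=> mh mk; rewrite (_ : [set x | _] = (fun x => k x - h x) @^-1` `[0, +oo[).
    by apply: (measurable_funB mk mh) => //; exact: measurable_itv.
  by apply/seteqP; split => x /=; rewrite in_itv /= andbT subr_ge0.
rewrite (_ : bad_set _ _ _ = (Om `&` [set x | `|ubar x| <= K]) `&` ((Om `&` [set x | `|G x| <= K])
    `&` (Om `&` [set x | cost (G x) alpha beta v <= cost (G x) alpha beta (ubar x) - dlt]))).
  apply: measurableI; [|apply: measurableI]; apply: mle => //.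
  - exact: measurableT_comp (@normr_measurable _ setT) mub.
  - exact: measurableT_comp (@normr_measurable _ setT) mG.
  - exact: mcost.
  - by apply: measurable_funB => //; exact: mcost.
apply/seteqP; split=> x /=; first by move=> [Ox [h1 [h2 h3]]].
by move=> [[Ox h1] [[_ h2] [_ h3]]].
Qed.

Lemma needle_violates_local_min (v dlt K : R) : (`|v|%:E <= b)%E -> 0 < dlt ->
  exists2 t : R, 0 < t & forall S, measurable S -> S `<=` bad_set v dlt K ->
    (0 < mu S)%E -> (mu S < t%:E)%E -> False.
Proof.
move=> vb dlt0; have ubar_L2 : inL2 mu Om ubar by case: ubar_ad.
have mub : measurable_fun Om ubar by case: ubar_L2.
pose C := `|v| + `|K| + 1; pose D := C + C.
have vC : `|v| <= C by rewrite /C; have := normr_ge0 K; lra.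
have KC : `|K| <= C by rewrite /C; have := normr_ge0 v; lra.
have D0 : 0 < D by rewrite addr_gt0 // ltr_pwDr // addr_ge0.
have bnd x : bad_set v dlt K x -> `|ubar x| <= C /\ `|G x| <= C.
  by move=> [_ [uK [GK _]]]; split; apply: le_trans (le_trans (ler_norm K) KC).
have [eps eps0 epsD] : exists2 eps, 0 < eps & eps * D = dlt / 2.
  by exists (dlt / (2 * D)); [rewrite divr_gt0 // mulr_gt0 | field; rewrite gt_eqF].
have [dl dl0 Hf] := f_exp _ eps0; have [r r0 Hloc] := ubar_loc.
have p0 : 0 < p by apply: lt_le_trans p_ge1.
exists (Num.min (dl / D) (r `^ p / D `^ p)); first by rewrite lt_min !divr_gt0 // powR_gt0.
move=> S mS SE Spos; have SOm : S `<=` Om by move=> x /SE[].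
have [s muS] : exists s, mu S = s%:E.
  by exists (fine (mu S)); rewrite fineK // ge0_fin_numE // (le_lt_trans (le_measure _ _ _ SOm)) ?inE.
rewrite muS lte_fin lt_min => /andP[sdl srp]; rewrite muS lte_fin in Spos.
pose u := needle ubar S v.
have Lu q : 0 < q ->
    (LpnormOm mu Om q (fun x => (u x - ubar x)%R) `^ q <= (D `^ q * s)%:E)%E.
  move=> q0; rewrite EFinM -muS; apply: LpnormOm_needle_pow_le => // x Sx.
  have [uC _] := bnd x (SE x Sx).
  by apply: le_trans (ler_normB _ _) _; rewrite lerD.
have L1 : (LpnormOm mu Om 1 (fun x => (u x - ubar x)%R) <= (D * s)%:E)%E.
  by have := Lu 1 ltr01; rewrite poweRe1 ?Lnorm_ge0 // powRr1 // ltW.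
have Uadu : Uad mu Om b u by exact: Uad_needle.
have fexp : (`|(f u - f ubar)%:E - \int[mu]_(x in Om) (G x * (u x - ubar x))%:E|
              <= (dlt / 2 * s)%:E)%E.
  apply: le_trans (Hf u Uadu _) _.
    by apply: le_lt_trans L1 _; rewrite lte_fin mulrC -ltr_pdivlMr.
  by rewrite -epsD -mulrA EFinM lee_wpmul2l // lee_fin ltW.
have costS x : S x -> cost (G x) alpha beta v - cost (G x) alpha beta (ubar x) <= - dlt.
  by move=> /SE[_ [_ [_]]]; lra.
have := @needle_increment_le _ _ mu Om mOm Om_fin alpha beta f G ubar mG ubar_L2
  S v C mS SOm vC (fun x Sx => bnd x (SE x Sx)) _ _ costS fexp.
have Dps : D `^ p * s < r `^ p by rewrite mulrC -ltr_pdivlMr ?powR_gt0.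
have := Hloc u Uadu (lt_of_poweR_le p0 (ltW r0) (Lnorm_ge0 _ _ _) (Lu p p0) Dps).
have uL2 : inL2 mu Om u by case: Uadu.
rewrite -/u muS /= !(gfun_Rintegral mu Om mOm Om_fin) // -!EFinD !lee_fin.
have : 0 < dlt * s by rewrite mulr_gt0.
lra.
Qed.

Lemma bad_set_null (v dlt K : R) : (`|v|%:E <= b)%E -> 0 < dlt ->
  mu (bad_set v dlt K) = 0%E.
Proof.
move=> vb dlt0; have [t t0 small_needle] := needle_violates_local_min v dlt K vb dlt0.
apply/eqP; rewrite eq_le measure_ge0 andbT leNgt; apply/negP => Epos.
have EOm : bad_set v dlt K `<=` Om by move=> x [].
have [S [mS SE Spos St]] := mu_nonatomic _ _ (measurable_bad_set v dlt K) EOm Epos t0.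
exact: small_needle mS SE Spos St.
Qed.

Lemma ae_pointwise_argmin : {ae mu, forall x, Om x ->
  is_argmin [set v | (`|v|%:E <= b)%E] (cost (G x) alpha beta) (ubar x)}.
Proof.
pose B m := if unpickle m is Some (q, k, K) then
  (if (`|ratr q : R|%:E <= b)%E then bad_set (ratr q) k.+1%:R^-1 K%:R else set0) else set0.
have nB m : mu.-negligible (B m).
  rewrite /B; case: (unpickle m) => [[[q k] K]|]; last exact: negligible_set0.
  case: ifPn => qb; last exact: negligible_set0.
  by apply/negligibleP; [exact: measurable_bad_set | exact: bad_set_null].
have ub : mu.-negligible (~` [set x | Om x -> (`|ubar x|%:E <= b)%E]) by case: ubar_ad.
apply: (negligibleS _ (negligibleU ub (negligible_bigcup nB))) => x /= xmin.
have [xb|] := pselect (Om x -> (`|ubar x|%:E <= b)%E); [right | by left].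
have Ox : Om x by apply: contrapT => nOx; apply: xmin.
have [q [k [K [qb uK GK qcost]]]] :=
  not_argmin_witness alpha_ge0 (xb Ox) (fun xm => xmin (fun => xm)).
exists (pickle (q, k, K)); first by [].
by rewrite /B pickleK qb.
Qed.

End local_optimality.

Theorem mainTheorem1 (R : realType) (n : nat) (n_gt0 : (0 < n)%N)
  (mu : {measure set (n.-tuple R) -> \bar R})
  (mu_leb : is_lebesgue_measure mu)
  (Om : set (n.-tuple R)) (Om_open : open_Rn Om) (Om_bdd : bounded_Rn Om)
  (Om_meas : measurable Om)
  (alpha beta : R) (alpha_ge0 : 0 <= alpha) (beta_gt0 : 0 < beta)
  (b : \bar R) (b_gt0 : (0 < b)%E)
  (f : (n.-tuple R -> R) -> R) (gradf : (n.-tuple R -> R) -> n.-tuple R -> R)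
  (f_diff : frechet_L2 mu Om f gradf)
  (ubar : n.-tuple R -> R) (ubar_inf : inLinf mu Om ubar) (ubar_ad : Uad mu Om b ubar)
  (p : R) (p_ge1 : 1 <= p)
  (ubar_loc : exists2 r : R, 0 < r & forall u, Uad mu Om b u ->
      (LpnormOm mu Om p (fun x => (u x - ubar x)%R) < r%:E)%E ->
      ((f ubar)%:E + gfun mu Om alpha beta ubar <= (f u)%:E + gfun mu Om alpha beta u)%E)
  (f_exp : forall eps : R, 0 < eps -> exists2 delta : R, 0 < delta &
      forall u, Uad mu Om b u -> (LpnormOm mu Om 1 (fun x => (u x - ubar x)%R) < delta%:E)%E ->
        (`| (f u - f ubar)%:E
             - \int[mu]_(x in Om) (gradf ubar x * (u x - ubar x))%R%:E |
           <= eps%:E * LpnormOm mu Om 1 (fun x => (u x - ubar x)%R))%E) :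
  {ae mu, forall x, Om x ->
     is_argmin [set v : R | (`|v|%:E <= b)%E]
       (fun v => gradf ubar x * v + alpha / 2 * v ^+ 2 + beta * abs0 v) (ubar x)}.
Proof.
case: n n_gt0 mu mu_leb Om Om_open Om_bdd Om_meas f gradf f_diff ubar ubar_inf ubar_ad
  ubar_loc f_exp => // n _ mu mu_leb Om _ Om_bdd Om_meas f gradf f_diff ubar _ ubar_ad
  ubar_loc f_exp.
have Om_fin : (mu Om < +oo)%E by exact: bounded_Rn_measure_lty.
have mu_nonatomic E t : measurable E -> E `<=` Om -> (0 < mu E)%E -> 0 < t ->
    exists S, [/\ measurable S, S `<=` E, (0 < mu S)%E & (mu S < t%:E)%E].
  move=> mE EOm; apply: lebesgue_nonatomic => //.
  by case: Om_bdd => M OmM; exists M => x /EOm /OmM.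
have mG : measurable_fun Om (gradf ubar) by case: (f_diff ubar (proj1 ubar_ad)) => -[].
exact: (ae_pointwise_argmin mu Om Om_meas Om_fin mu_nonatomic alpha beta b f (gradf ubar)
  ubar p alpha_ge0 mG ubar_ad p_ge1 ubar_loc f_exp).
Qed.
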